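(* Let $X$ be a finite connected poset, $\theta\in\mathcal{AM}(X)$ and $\mathfrak{C}\in\mathcal{C}(X)/{\sim}$. Then there exists a poset isomorphism or anti-isomorphism $\lambda:\mathrm{supp}(\mathfrak{C})\to\mathrm{supp}(\widetilde\theta(\mathfrak{C}))$ such that for all $x<y$ in $\mathrm{supp}(\mathfrak{C})$ one has $\theta(e_{xy})=e_{\lambda(x)\lambda(y)}$ if $\lambda$ is an isomorphism, and $\theta(e_{xy})=e_{\lambda(y)\lambda(x)}$ if $\lambda$ is an anti-isomorphism.
   Context: For $x<y$ in $X$, $e_{xy}$ denotes the corresponding basis element of the incidence algebra (the indicator of $(x,y)$); $B=\{e_{xy}:x<y\}$. $\mathcal{C}(X)$ is the set of maximal chains. For a bijection $\theta:B\to B$ and $C:u_1<\dots<u_m$ in $\mathcal{C}(X)$, $\theta$ is increasing on $C$ if there is $D:v_1<\dots<v_m$ in $\mathcal{C}(X)$ with $\theta(e_{u_iu_j})=e_{v_iv_j}$ for all $i<j$, and decreasing on $C$ if there is such $D$ with $\theta(e_{u_iu_j})=e_{v_{m-j+1}v_{m-i+1}}$ for all $i<j$; in both cases write $\theta(C)=D$. $\mathcal{M}(X)$ is the set of bijections $B\to B$ increasing or decreasing on every maximal chain. A walk is a sequence $u_0,\dots,u_m$ in which for each $i$ one of $u_i,u_{i+1}$ covers the other; closed if $u_0=u_m$. For a closed walk $\Gamma:u_0,\dots,u_m=u_0$ and $z\in X$: $s^+_{\theta,\Gamma}(z)=|\{i: u_i<u_{i+1},\ \exists w>z,\ \theta(e_{zw})=e_{u_iu_{i+1}}\}|$,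 $s^-_{\theta,\Gamma}(z)=|\{i: u_i>u_{i+1},\ \exists w>z,\ \theta(e_{zw})=e_{u_{i+1}u_i}\}|$, $t^+_{\theta,\Gamma}(z)=|\{i: u_i<u_{i+1},\ \exists w<z,\ \theta(e_{wz})=e_{u_iu_{i+1}}\}|$, $t^-_{\theta,\Gamma}(z)=|\{i: u_i>u_{i+1},\ \exists w<z,\ \theta(e_{wz})=e_{u_{i+1}u_i}\}|$ (with $0\le i\le m-1$). $\theta$ is admissible if $s^+-s^-=t^+-t^-$ at every $z$ for every closed walk $\Gamma$; $\mathcal{AM}(X)$ is the set of admissible elements of $\mathcal{M}(X)$. Two maximal chains are linked if they share an element lying in neither $\mathrm{Min}(X)$ nor $\mathrm{Max}(X)$; $\sim$ is the equivalence relation on $\mathcal{C}(X)$ generated by linkedness. The support of a class $\mathfrak{C}$ is $\mathrm{supp}(\mathfrak{C})=\bigcup_{C\in\mathfrak{C}}C$, with the induced order. For $\theta\in\mathcal{M}(X)$, $\widetilde\theta(\mathfrak{C})$ denotes the $\sim$-class of $\theta(C)$ for $C\in\mathfrak{C}$ (this does not depend on the choice of $C$). *)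

From HB Require Import structures.
From mathcomp Require Import all_boot all_order all_algebra.
Set Implicit Arguments. Unset Strict Implicit. Unset Printing Implicit Defensive.
Import Order.TTheory.
Local Open Scope order_scope.

Section Incidence.
Context {d : Order.disp_t} {X : finPOrderType d}.

(* The basis B = { e_xy : x < y }, represented by the pairs (x,y) with x < y. *)
Definition Bt := {p : X * X | p.1 < p.2}.

Definition maps_to (theta : Bt -> Bt) (x y u v : X) : Prop :=
  forall p : Bt, val p = (x, y) -> val (theta p) = (u, v).

Definition connected_poset : Prop :=
  forall x y : X, connect (fun a b : X => (a < b) || (b < a)) x y.

Definition chainb (C : {set X}) : bool :=
  [forall x in C, [forall y in C, x >=< y]].

Definition maxchain (C : {set X}) : bool :=
  chainb C && [forall D : {set X}, (chainb D && (C \subset D)) ==> (D == C)].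

Definition incr_on (theta : Bt -> Bt) (C D : {set X}) : Prop :=
  maxchain D /\
  exists f : X -> X,
    {in C &, forall x y, x < y -> f x < f y} /\ f @: C = D /\
    {in C &, forall x y, x < y -> maps_to theta x y (f x) (f y)}.

Definition decr_on (theta : Bt -> Bt) (C D : {set X}) : Prop :=
  maxchain D /\
  exists f : X -> X,
    {in C &, forall x y, x < y -> f y < f x} /\ f @: C = D /\
    {in C &, forall x y, x < y -> maps_to theta x y (f y) (f x)}.

Definition image_chain (theta : Bt -> Bt) (C D : {set X}) : Prop :=
  incr_on theta C D \/ decr_on theta C D.

Definition inM (theta : Bt -> Bt) : Prop :=
  bijective theta /\
  forall C : {set X}, maxchain C -> exists D, image_chain theta C D.

Definition covers (x y : X) : bool := (x < y) && [forall z, ~~ ((x < z) && (z < y))].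
Definition adj (x y : X) : bool := covers x y || covers y x.

Definition steps (x0 : X) (s : seq X) : seq (X * X) := zip (x0 :: s) s.

Definition s_plus (theta : Bt -> Bt) (x0 : X) s (z : X) : nat :=
  count (fun st : X * X => (st.1 < st.2) &&
     [exists p : Bt, ((val p).1 == z) && (val (theta p) == st)]) (steps x0 s).
Definition s_minus (theta : Bt -> Bt) (x0 : X) s (z : X) : nat :=
  count (fun st : X * X => (st.2 < st.1) &&
     [exists p : Bt, ((val p).1 == z) && (val (theta p) == (st.2, st.1))]) (steps x0 s).
Definition t_plus (theta : Bt -> Bt) (x0 : X) s (z : X) : nat :=
  count (fun st : X * X => (st.1 < st.2) &&
     [exists p : Bt, ((val p).2 == z) && (val (theta p) == st)]) (steps x0 s).
Definition t_minus (theta : Bt -> Bt) (x0 : X) s (z : X) : nat :=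
  count (fun st : X * X => (st.2 < st.1) &&
     [exists p : Bt, ((val p).2 == z) && (val (theta p) == (st.2, st.1))]) (steps x0 s).

Definition admissible (theta : Bt -> Bt) : Prop :=
  forall (x0 : X) (s : seq X), path adj x0 s -> last x0 s = x0 ->
  forall z : X,
    ((s_plus theta x0 s z)%:Z - (s_minus theta x0 s z)%:Z =
     (t_plus theta x0 s z)%:Z - (t_minus theta x0 s z)%:Z)%R.

Definition inAM (theta : Bt -> Bt) : Prop := inM theta /\ admissible theta.

Definition is_min (x : X) : bool := [forall y, ~~ (y < x)].
Definition is_max (x : X) : bool := [forall y, ~~ (x < y)].

Definition linked (C D : {set X}) : bool :=
  [&& maxchain C, maxchain D & [exists x in C :&: D, ~~ is_min x && ~~ is_max x]].

Definition chain_equiv (C D : {set X}) : bool := connect linked C D.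

Definition supp (C : {set X}) : {set X} :=
  \bigcup_(D | maxchain D && chain_equiv C D) D.

End Incidence.

(* For z in X and a covering pair a < b, the number of times theta^-1(e_ab)
   starts at z minus the number of times it ends at z has zero circulation
   along closed walks (this is admissibility), so it is a difference of
   potentials P_z(b) - P_z(a).  As theta is increasing or decreasing on every
   maximal chain it is additive along chains, and theta^-1 is a power of theta;
   hence there is H : X -> Z^X with e_u - e_v = H(y) - H(x) whenever
   theta(e_xy) = e_uv.  Choose c in Z^X and a sign so that on the given chain C
   the vector lambda(x) = c -+ H(x) is the unit vector at the image of x; then
   lambda(x) is a unit vector on every chain linked to one where it already is:
   splice the two chains at their common non-extremal point; theta keeps its
   orientation on the spliced chain, for otherwise it would exchange the labels
   of an extremal and a non-extremal point, whereas both theta and the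
   labelling preserve extremality.  So lambda is a point map on supp C with
   theta(e_xy) = e_lambda(x)lambda(y) or e_lambda(y)lambda(x), and the same
   construction for theta^-1, started from theta(C), inverts it. *)

From HB Require Import structures.
From mathcomp Require Import all_boot all_order all_algebra.
From mathcomp Require Import fingroup perm zify.
Import Order.TTheory GRing.Theory.
Local Open Scope order_scope.
Set Implicit Arguments. Unset Strict Implicit. Unset Printing Implicit Defensive.

Section MaximalChains.
Context {d : Order.disp_t} {X : finPOrderType d}.
Implicit Types (C D E : {set X}) (x y z w : X).

Lemma chainbP C : reflect {in C &, forall x y, x >=< y} (chainb C).
Proof.
apply: (iffP idP) => [/forall_inP cC x y xC yC | cC].
  exact: (forall_inP (cC x xC) y yC).
by apply/forall_inP => x xC; apply/forall_inP => y yC; apply: cC.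
Qed.

Lemma maxchain_chain E : maxchain E -> {in E &, forall x y, x >=< y}.
Proof. by case/andP => /chainbP. Qed.

Lemma maxchainP E : maxchain E -> forall w, {in E, forall e, w >=< e} -> w \in E.
Proof.
move=> mE w wE; have cE := maxchain_chain mE.
have cwE : chainb (w |: E).
  apply/chainbP => a b; rewrite !inE => /predU1P[->|aE] /predU1P[->|bE].
  - exact: comparablexx.
  - exact: wE.
  - by rewrite comparable_sym wE.
  - exact: cE.
case/andP: mE => _ /forallP /(_ (w |: E)); rewrite cwE subsetUr => /eqP <-.
exact: setU11.
Qed.

Lemma maxchain_minE E x : maxchain E -> x \in E -> is_min x = [forall e in E, x <= e].
Proof.
move=> mE xE; have cE := maxchain_chain mE.
apply/forallP/forall_inP => [xmin e eE | xleE y].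
  by case: (comparable_ltgtP (cE x e xE eE)) => // ex; have := xmin e; rewrite ex.
apply/negP => yx; have yE : y \in E.
  by apply: (maxchainP mE) => e /xleE xe; rewrite /Order.comparable (le_trans (ltW yx) xe).
by have := xleE y yE; rewrite lt_geF.
Qed.

Lemma maxchain_maxE E x : maxchain E -> x \in E -> is_max x = [forall e in E, e <= x].
Proof.
move=> mE xE; have cE := maxchain_chain mE.
apply/forallP/forall_inP => [xmax e eE | eleX y].
  by case: (comparable_ltgtP (cE x e xE eE)) => // xe; have := xmax e; rewrite xe.
apply/negP => xy; have yE : y \in E.
  apply: (maxchainP mE) => e /eleX ex.
  by rewrite /Order.comparable (le_trans ex (ltW xy)) orbT.
by have := eleX y yE; rewrite lt_geF.
Qed.

Lemma maxchain_min_lt E x : maxchain E -> x \in E -> ~~ is_min x ->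
  exists2 m, m \in E & is_min m && (m < x).
Proof.
move=> mE xE xmin; case: (arg_minnP (fun y => #|[set t | t < y]|) xE) => m mE' mmin.
have m_le e : e \in E -> m <= e.
  move=> eE; case: (comparable_ltgtP (maxchain_chain mE mE' eE)) => [/ltW //|em|//].
  have := mmin e eE; rewrite leqNgt => /negP[]; apply: proper_card.
  apply/properP; split; last by exists e; rewrite !inE ?em ?ltxx.
  by apply/subsetP => t; rewrite !inE => /lt_trans; apply.
have mmin' : is_min m by rewrite (maxchain_minE mE mE'); apply/forall_inP.
exists m; rewrite // mmin' lt_neqAle m_le // andbT.
by apply: contraNneq xmin => <-.
Qed.

Lemma maxchain_max_gt E x : maxchain E -> x \in E -> ~~ is_max x ->
  exists2 m, m \in E & is_max m && (x < m).
Proof.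
move=> mE xE xmax; case: (arg_minnP (fun y => #|[set t | y < t]|) xE) => m mE' mmin.
have le_m e : e \in E -> e <= m.
  move=> eE; case: (comparable_ltgtP (maxchain_chain mE mE' eE)) => [me|/ltW //|//].
  have := mmin e eE; rewrite leqNgt => /negP[]; apply: proper_card.
  apply/properP; split; last by exists e; rewrite !inE ?me ?ltxx.
  by apply/subsetP => t; rewrite !inE; apply: lt_trans.
have mmax : is_max m by rewrite (maxchain_maxE mE mE'); apply/forall_inP.
exists m; rewrite // mmax lt_neqAle le_m // andbT.
by apply: contraNneq xmax => ->.
Qed.

Lemma maxchain_lt_neighbor E x w : maxchain E -> x \in E -> (x < w) || (w < x) ->
  exists2 e, e \in E & (x < e) || (e < x).
Proof.
move=> mE xE xw.
have [/exists_inP[e eE xe] | noE] := boolP [exists e in E, (x < e) || (e < x)].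
  by exists e.
have eqx e : e \in E -> e = x.
  move=> eE; apply/eqP; apply: contraNT noE => ex; apply/exists_inP; exists e => //.
  by case: (comparable_ltgtP (maxchain_chain mE xE eE)) ex => // ->; rewrite eqxx.
have wE : w \in E.
  apply: (maxchainP mE) => e /eqx ->; rewrite /Order.comparable.
  by case/orP: xw => /ltW ->; rewrite ?orbT.
by move: xw; rewrite (eqx w wE) ltxx.
Qed.

Lemma maxchain_intro E : chainb E ->
  (forall D : {set X}, chainb D -> E \subset D -> D \subset E) -> maxchain E.
Proof.
move=> cE Emax; rewrite /maxchain cE; apply/forallP => D.
by apply/implyP => /andP[cD ED]; rewrite eqEsubset Emax.
Qed.

Lemma chain_sub_maxchain (A : {set X}) : chainb A -> exists2 E, maxchain E & A \subset E.
Proof.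
move=> cA; have PA : chainb A && (A \subset A) by rewrite cA subxx.
have [E /andP[cE AE] Emax] :=
  @arg_maxnP _ A (fun B : {set X} => chainb B && (A \subset B)) (fun B => #|B|) PA.
exists E => //; apply: maxchain_intro => // D cD ED.
have /eqP <- // : E == D.
by rewrite eqEcard ED; apply: Emax; rewrite cD (subset_trans AE ED).
Qed.

Lemma maxchain_through3 x w y : x < w -> w < y ->
  exists E, [/\ maxchain E, x \in E, w \in E & y \in E].
Proof.
move=> xw wy; have xy := lt_trans xw wy.
have c3 : chainb [set x; w; y].
  apply/chainbP => a b; rewrite !inE => /orP[/orP[]|] /eqP-> /orP[/orP[]|] /eqP->;
    by rewrite /Order.comparable ?lexx ?(ltW xw) ?(ltW wy) ?(ltW xy) ?orbT.
case: (chain_sub_maxchain c3) => E mE /subsetP sE.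
by exists E; split; rewrite // sE // !inE eqxx ?orbT.
Qed.

Lemma splice_maxchain E1 E2 z : maxchain E1 -> maxchain E2 -> z \in E1 -> z \in E2 ->
  maxchain ([set x in E1 | x <= z] :|: [set x in E2 | z <= x]).
Proof.
move=> m1 m2 z1 z2; set E3 := _ :|: _.
have c1 := maxchain_chain m1; have c2 := maxchain_chain m2.
have cE3 : chainb E3.
  apply/chainbP => a b; rewrite !inE.
  case/orP=> [/andP[a1 az]|/andP[a2 za]] /orP[/andP[b1 bz]|/andP[b2 zb]].
  - exact: c1.
  - by rewrite /Order.comparable (le_trans az zb).
  - by rewrite /Order.comparable (le_trans bz za) orbT.
  - exact: c2.
apply: maxchain_intro => // D /chainbP cD /subsetP E3D; apply/subsetP => w wD.
have zD : z \in D by apply: E3D; rewrite !inE z1 lexx.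
case/orP: (cD w z wD zD) => [wz|zw].
- suff wE1 : w \in E1 by rewrite !inE wE1 wz.
  apply: (maxchainP m1) => e eE; case/orP: (c1 e z eE z1) => [ez|ze].
    by apply: cD => //; apply: E3D; rewrite !inE eE ez.
  by rewrite /Order.comparable (le_trans wz ze).
- suff wE2 : w \in E2 by rewrite !inE wE2 zw orbT.
  apply: (maxchainP m2) => e eE; case/orP: (c2 e z eE z2) => [ez|ze].
    by rewrite /Order.comparable (le_trans ez zw) orbT.
  by apply: cD => //; apply: E3D; rewrite !inE eE ze orbT.
Qed.

Lemma lt_cover_ind (P : X -> X -> Prop) :
  (forall x y, covers x y -> P x y) ->
  (forall x w y, x < w -> w < y -> P x w -> P w y -> P x y) ->
  forall x y, x < y -> P x y.
Proof.
move=> Pcover Ptrans x y.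
move: {2}#|_| (leqnn #|[set u | x < u < y]|) => n; elim: n x y => [|n IHn] x y hn xy.
  apply: Pcover; rewrite /covers xy; apply/forallP => w; apply/negP => xwy.
  by move: hn; rewrite leqn0 => /eqP/cards0_eq/setP/(_ w); rewrite !inE xwy.
have [/Pcover //|] := boolP (covers x y).
rewrite /covers xy /= => /forallPn[w]; rewrite negbK => /andP[xw wy].
have shrink a b : x <= a -> b <= y -> w \notin [set u | a < u < b] ->
    leq #|[set u | a < u < b]| n.
  move=> xa by_ wab; rewrite -ltnS; apply: leq_trans hn; apply: proper_card.
  apply/properP; split; last by exists w; rewrite // inE xw.
  apply/subsetP => u; rewrite !inE => /andP[au ub].
  by rewrite (le_lt_trans xa au) (lt_le_trans ub by_).
apply: (Ptrans x w y xw wy); apply: IHn => //; apply: shrink;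
  by rewrite ?lexx ?(ltW xw) ?(ltW wy) // inE ltxx ?andbF.
Qed.

Definition extremal x := is_min x || is_max x.

Definition strict_mono_in (b : bool) E (g : X -> X) :=
  {in E &, forall x y, x < y -> if b then g x < g y else g y < g x}.

Lemma strict_mono_in_le b E g : maxchain E -> strict_mono_in b E g ->
  {in E &, forall x y, (x <= y) = (if b then g x <= g y else g y <= g x)}.
Proof.
move=> mE gmono x y xE yE.
case: (comparable_ltgtP (maxchain_chain mE xE yE)) => [xy|yx|->].
- by have := gmono x y xE yE xy; case: (b) => /ltW ->.
- by have := gmono y x yE xE yx; case: (b) => /lt_geF ->.
- by case: (b); rewrite lexx.
Qed.

Lemma strict_mono_in_lt b E g : maxchain E -> strict_mono_in b E g ->
  {in E &, forall x y, (x < y) = (if b then g x < g y else g y < g x)}.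
Proof.
move=> mE gmono x y xE yE.
case: (comparable_ltgtP (maxchain_chain mE xE yE)) => [xy|yx|->].
- by have := gmono x y xE yE xy; case: (b) => ->.
- by have := gmono y x yE xE yx; case: (b) => /lt_gtF ->.
- by case: (b); rewrite ltxx.
Qed.

Lemma strict_mono_in_inj b E g : maxchain E -> strict_mono_in b E g ->
  {in E &, injective g}.
Proof.
move=> mE gmono x y xE yE gxy.
case: (comparable_ltgtP (maxchain_chain mE xE yE)) => [xy|yx|//].
- by have := gmono x y xE yE xy; rewrite gxy; case: (b); rewrite ltxx.
- by have := gmono y x yE xE yx; rewrite gxy; case: (b); rewrite ltxx.
Qed.

Lemma extremal_image b E D g : maxchain E -> maxchain D -> g @: E = D ->
  strict_mono_in b E g -> {in E, forall x, extremal (g x) = extremal x}.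
Proof.
move=> mE mD gED gmono x xE.
have gxD : g x \in D by rewrite -gED imset_f.
have gle := strict_mono_in_le mE gmono.
have forall_imset (P : pred X) : [forall e in E, P (g e)] = [forall y in D, P y].
  rewrite -gED; apply/forall_inP/forall_inP => [Pg _ /imsetP[e eE ->] | PD e eE].
    exact: Pg.
  exact/PD/imset_f.
have eq_forall_in (P Q : pred X) : {in E, P =1 Q} ->
    [forall e in E, P e] = [forall e in E, Q e].
  by move=> PQ; apply: eq_forallb => e; case eE: (e \in E); rewrite //= PQ.
rewrite /extremal (maxchain_minE mE xE) (maxchain_maxE mE xE).
rewrite (maxchain_minE mD gxD) (maxchain_maxE mD gxD) -!forall_imset.
rewrite (eq_forall_in _ _ (fun e eE => gle x e xE eE)).
rewrite (eq_forall_in _ _ (fun e eE => gle e x eE xE)).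
by case: b {gmono gle}; rewrite // orbC.
Qed.

End MaximalChains.

Section ChainMaps.
Context {d : Order.disp_t} {X : finPOrderType d}.
Local Notation BT := (@Bt d X).
Implicit Types (th thi : BT -> BT) (A B C D : {set X}) (f g l : X -> X) (b : bool).

Definition chain_map th C D f b :=
  [/\ maxchain D, strict_mono_in b C f, f @: C = D &
      {in C &, forall x y, x < y ->
         maps_to th x y (if b then f x else f y) (if b then f y else f x)}].

Definition chain_monotone th :=
  forall C, maxchain C -> exists D f b, chain_map th C D f b.

Lemma image_chain_map th C D : image_chain th C D -> exists f b, chain_map th C D f b.
Proof. by case=> -[mD [f [fmono [fCD thf]]]]; [exists f, true | exists f, false]. Qed.

Lemma inM_chain_monotone th : inM th -> chain_monotone th.
Proof.
case=> _ thM C mC; have [D /image_chain_map[f [b thCD]]] := thM C mC.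
by exists D, f, b.
Qed.

Lemma maps_to_lt th x y u v : (x < y)%O -> maps_to th x y u v -> (u < v)%O.
Proof.
by move=> xy /(_ (Sub (x, y) xy) erefl) thxy; have := valP (th (Sub (x, y) xy)); rewrite thxy.
Qed.

Lemma chain_map_mem th C D f b : chain_map th C D f b -> {in C, forall x, f x \in D}.
Proof. by case=> _ _ <- _ x xC; apply: imset_f. Qed.

Lemma chain_map_val th C D f b : chain_map th C D f b ->
  forall x y (p : BT), x \in C -> y \in C -> x < y -> val p = (x, y) ->
  val (th p) = if b then (f x, f y) else (f y, f x).
Proof. by case=> _ _ _ thf x y p xC yC xy /(thf x y xC yC xy) ->; case: (b). Qed.

Lemma chain_map_comp th1 th2 C D1 D2 f1 f2 b1 b2 :
  chain_map th1 C D1 f1 b1 -> chain_map th2 D1 D2 f2 b2 ->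
  chain_map (th2 \o th1) C D2 (f2 \o f1) (b1 == b2).
Proof.
move=> th1C th2D1; have f1D1 := chain_map_mem th1C.
case: th1C th2D1 => _ f1mono f1C thf1 [mD2 f2mono f2D1 thf2].
split=> //.
- move=> x y xC yC xy /=; have := f1mono x y xC yC xy.
  by case: (b1) => f1xy; have := f2mono _ _ (f1D1 _ _) (f1D1 _ _) f1xy; case: (b2); apply.
- by rewrite imset_comp f1C.
- move=> x y xC yC xy p /(thf1 x y xC yC xy) /= th1p.
  have := f1mono x y xC yC xy.
  by case: (b1) th1p => th1p f1xy; rewrite (thf2 _ _ _ _ f1xy _ th1p) ?f1D1 //; case: (b2).
Qed.

Lemma chain_monotone_iter th n : chain_monotone th -> chain_monotone (iter n th).
Proof.
move=> thM; elim: n => [|n IHn] C mC.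
  exists C, id, true; split=> //; last by move=> x y _ _ _ p.
  by apply/setP => x; apply/imsetP/idP => [[y yC ->] //|xC]; exists x.
have [D1 [f1 [b1 thC]]] := IHn C mC.
have [D2 [f2 [b2 thD1]]] := thM D1 (let: And4 mD1 _ _ _ := thC in mD1).
by exists D2, (f2 \o f1), (b1 == b2); apply: chain_map_comp thC thD1.
Qed.

Lemma chain_monotone_reflect_covers th : chain_monotone th ->
  forall p : BT, covers (val (th p)).1 (val (th p)).2 -> covers (val p).1 (val p).2.
Proof.
move=> thM [[x y] /= xy] /andP[_ /forallP thp_cover]; rewrite /covers xy /=.
apply/forallP => w; apply/negP => /andP[xw wy].
have [E [mE xE wE yE]] := maxchain_through3 xw wy.
have [D [f [b thE]]] := thM E mE.
move: thp_cover; rewrite (chain_map_val thE (p := Sub (x, y) xy) xE yE xy) //.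
case: thE => _ fmono _ _; have fxw := fmono x w xE wE xw; have fwy := fmono w y wE yE wy.
by case: (b) fxw fwy => fxw fwy /(_ (f w)); rewrite fxw fwy.
Qed.

Lemma eq_chain_monotone th1 th2 : th1 =1 th2 -> chain_monotone th1 -> chain_monotone th2.
Proof.
move=> th12 th1M C mC; have [D [f [b [mD fmono fCD thf]]]] := th1M C mC.
by exists D, f, b; split=> // x y xC yC xy p; rewrite -th12; apply: thf.
Qed.

Lemma chain_map_inv th thi C D f b : cancel th thi -> cancel thi th -> maxchain C ->
  chain_map th C D f b -> exists g, chain_map thi D C g b.
Proof.
move=> thK thiK mC thC; have fD := chain_map_mem thC.
case: thC => mD fmono fCD thf; have finj := strict_mono_in_inj mC fmono.
pose g y := odflt y [pick x in C | f x == y].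
have gf : {in C, forall x, g (f x) = x}.
  move=> x xC; rewrite /g; case: pickP => [x' /andP[x'C /eqP] | /(_ x)].
    by apply: finj.
  by rewrite xC eqxx.
have flt := strict_mono_in_lt mC fmono.
exists g; split=> //; rewrite -fCD.
- move=> _ _ /imsetP[x1 x1C ->] /imsetP[x2 x2C ->] f12; rewrite !gf //.
  by case: (b) flt f12 => flt f12; rewrite flt.
- by rewrite -imset_comp (eq_in_imset gf) imset_id.
- move=> _ _ /imsetP[x1 x1C ->] /imsetP[x2 x2C ->] f12 p pf; rewrite !gf //.
  case: (b) flt thf => flt thf.
    have x12 : (x1 < x2)%O by rewrite flt.
    by rewrite -(thf x1 x2 x1C x2C x12 (Sub (x1, x2) x12) erefl) in pf;
      rewrite (val_inj pf) thK.
  have x21 : (x2 < x1)%O by rewrite flt.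
  by rewrite -(thf x2 x1 x2C x1C x21 (Sub (x2, x1) x21) erefl) in pf;
    rewrite (val_inj pf) thK.
Qed.

Definition supp_labelling th A B l b :=
  {in supp A &, forall x y, (x < y)%O ->
     maps_to th x y (if b then l x else l y) (if b then l y else l x)} /\
  {in supp A, forall x, l x \in supp B}.

End ChainMaps.

Lemma cancel_iter (T : finType) (f g : T -> T) : cancel f g -> exists n, g =1 iter n f.
Proof.
move=> fK; pose s := perm (can_inj fK); exists #[s]%g.-1 => x.
have iter_s y : iter #[s]%g f y = y.
  rewrite -[RHS](perm1 y) -(expg_order s) permX.
  by apply: eq_iter => z; rewrite permE.
by rewrite -[in LHS](iter_s x); move: (order_gt0 s); case: #[s]%g => //= n _;
  rewrite iterSr fK.
Qed.

Section Walks.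
Context {d : Order.disp_t} {X : finPOrderType d}.
Implicit Types (x y z : X) (s : seq X) (g : X -> X -> int).
Local Open Scope ring_scope.

Definition step_val g (st : X * X) : int :=
  if (st.1 < st.2)%O then g st.1 st.2 else if (st.2 < st.1)%O then - g st.2 st.1 else 0.

Definition flow g x s : int := \sum_(st <- steps x s) step_val g st.

Definition walk x y s := path adj x s && (last x s == y).

Lemma flow_cat g x s1 s2 : flow g x (s1 ++ s2) = flow g x s1 + flow g (last x s1) s2.
Proof.
rewrite /flow -big_cat; congr bigop.
by elim: s1 x => [|y s1 IHs] x //=; rewrite /steps /= -IHs.
Qed.

Lemma walk_cat x y z s1 s2 : walk x y s1 -> walk y z s2 -> walk x z (s1 ++ s2).
Proof.
by case/andP=> p1 /eqP l1 /andP[p2 l2]; rewrite /walk cat_path last_cat l1 p1 p2.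
Qed.

Lemma walk_lt x y : (x < y)%O -> (exists s, walk x y s) /\ (exists s, walk y x s).
Proof.
apply: (lt_cover_ind (P := fun x y => (exists s, walk x y s) /\ exists s, walk y x s)).
  by move=> {}x {}y xy; split; [exists [:: y] | exists [:: x]];
    rewrite /walk /= /adj xy ?orbT eqxx.
move=> {}x w {}y _ _ [[s1 w1] [s1' w1']] [[s2 w2] [s2' w2']].
by split; [exists (s1 ++ s2); apply: walk_cat w2 | exists (s2' ++ s1'); apply: walk_cat w1'].
Qed.

Lemma connected_trivial_or_comparable : @connected_poset d X ->
  (forall x y : X, x = y) \/ (forall x : X, exists w, (x < w)%O || (w < x)%O).
Proof.
move=> Xconn; have [/existsP[a /existsP[a' aa']] | triv] :=
  boolP [exists a : X, exists a' : X, a != a'].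
  right=> x; have [t tx] : exists t, t != x.
    by have [<-|] := eqVneq a x; [exists a' | exists a]; rewrite // eq_sym.
  case/connectP: (Xconn x t) => -[|w p] /=; first by move=> _ tx'; rewrite -tx' eqxx in tx.
  by case/andP=> xw _ _; exists w.
left=> x y; apply/eqP; apply: contraNT triv => xy.
by apply/existsP; exists x; apply/existsP; exists y.
Qed.

Lemma connected_walk : @connected_poset d X -> forall x y : X, exists s, walk x y s.
Proof.
move=> Xconn x y; have /connectP[p] := Xconn x y.
elim: p x => [|z p IHp] x /=; first by move=> _ ->; exists [::]; rewrite /walk /=.
case/andP=> /orP xz /IHp {}IHp /IHp[s2 w2].
have [s1 w1] : exists s1, walk x z s1.
  by case: xz => [/walk_lt[] | /walk_lt[_]].
by exists (s1 ++ s2); apply: walk_cat w2.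
Qed.

Lemma zero_circulation_potential g : @connected_poset d X ->
  (forall x s, path adj x s -> last x s = x -> flow g x s = 0) ->
  exists P : X -> int, forall a b, covers a b -> g a b = P b - P a.
Proof.
move=> Xconn circ0.
have [r _ | X0] := pickP (@predT X); last by exists (fun=> 0) => a; have := X0 a.
pose W x y := xchoose (connected_walk Xconn x y).
have WP x y : walk x y (W x y) := xchooseP (connected_walk Xconn x y).
have closed0 s : walk r r s -> flow g r s = 0 by case/andP=> ps /eqP; apply: circ0.
exists (fun x => flow g r (W r x)) => a b ab.
have wab : walk a b [:: b] by rewrite /walk /= /adj ab eqxx.
have /closed0 := walk_cat (WP r b) (WP b r).
have /closed0 := walk_cat (WP r a) (walk_cat wab (WP b r)).
rewrite !flow_cat /= (eqP (proj2 (andP (WP r a)))) (eqP (proj2 (andP (WP r b)))).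
have -> : flow g a [:: b] = g a b.
  by rewrite /flow /steps /= big_seq1 /step_val /= (proj1 (andP ab)).
by move=> h1 h2; lia.
Qed.

End Walks.

Definition ind (T : eqType) (a v : T) : int := (a == v)%:Z.

Lemma ind_diff_inj (T : eqType) (p q r s : T) :
  (forall v, ind p v - ind q v = ind r v - ind s v)%R -> r != s -> p = r /\ q = s.
Proof.
move=> pqrs rs; have := pqrs r; have := pqrs s.
rewrite /ind !eqxx (eq_sym s r) (negbTE rs).
by case: (p =P r) => [->|_]; case: (q =P s) => [->|_]; case: eqP; case: eqP => //=; lia.
Qed.

Section Potentials.
Context {d : Order.disp_t} {X : finPOrderType d}.
Local Notation BT := (@Bt d X).
Implicit Types (th : BT -> BT) (x y v : X) (h : X -> int).
Local Open Scope ring_scope.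

Definition edge_vec (p : X * X) v : int := ind p.1 v - ind p.2 v.

Definition cover_potential th := forall v, exists h, forall q : BT,
  covers (val q).1 (val q).2 -> edge_vec (val (th q)) v = h (val q).2 - h (val q).1.

Definition potential th (H : X -> X -> int) :=
  forall v (q : BT), edge_vec (val (th q)) v = H v (val q).2 - H v (val q).1.

Lemma edge_vec_pairing h (p : X * X) : h p.2 - h p.1 = - \sum_u h u * edge_vec p u.
Proof.
have pair_ind a : \sum_u h u * ind a u = h a.
  rewrite (bigD1 a) //= /ind eqxx mulr1 big1 ?addr0 // => u /negbTE.
  by rewrite eq_sym => ->; rewrite mulr0.
rewrite /edge_vec; under eq_bigr => u _ do rewrite mulrBr.
by rewrite sumrB !pair_ind opprB.
Qed.

Lemma chain_monotone_edge_vecD th v x w y (p p1 p2 : BT) : chain_monotone th ->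
  (x < w)%O -> (w < y)%O -> val p = (x, y) -> val p1 = (x, w) -> val p2 = (w, y) ->
  edge_vec (val (th p)) v = edge_vec (val (th p1)) v + edge_vec (val (th p2)) v.
Proof.
move=> thM xw wy pxy pxw pwy; have [E [mE xE wE yE]] := maxchain_through3 xw wy.
have [D [f [b thE]]] := thM E mE.
rewrite (chain_map_val thE xE yE (lt_trans xw wy) pxy).
rewrite (chain_map_val thE xE wE xw pxw) (chain_map_val thE wE yE wy pwy).
by case: (b); rewrite /edge_vec /=; lia.
Qed.

Lemma cover_potential_extend th : chain_monotone th -> cover_potential th ->
  exists H, potential th H.
Proof.
move=> thM /fin_all_exists[H Hcover]; exists H => v q.
suff: forall x y, (x < y)%O -> forall q : BT, val q = (x, y) ->
    edge_vec (val (th q)) v = H v y - H v x.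
  by case: q => -[x y] /= xy; apply.
apply: lt_cover_ind => [x y xy {}q qxy | x w y xw wy IHxw IHwy {}q qxy].
  by have := Hcover v q; rewrite qxy; apply.
rewrite (chain_monotone_edge_vecD v (p1 := Sub (x, w) xw) (p2 := Sub (w, y) wy)
  thM xw wy qxy erefl erefl).
by rewrite (IHxw (Sub (x, w) xw) erefl) (IHwy (Sub (w, y) wy) erefl) addrC subrKA.
Qed.

End Potentials.

Section AdmissiblePotential.
Context {d : Order.disp_t} {X : finPOrderType d}.
Local Notation BT := (@Bt d X).
Local Open Scope ring_scope.
Variables th thi : BT -> BT.
Hypotheses (thK : cancel th thi) (thiK : cancel thi th).
Hypotheses (thM : chain_monotone th) (th_adm : admissible th).
Hypothesis Xconn : @connected_poset d X.

Definition pull_incidence (v a b : X) : int :=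
  ([exists p : BT, ((val p).1 == v) && (val (th p) == (a, b))] : nat)%:Z -
  ([exists p : BT, ((val p).2 == v) && (val (th p) == (a, b))] : nat)%:Z.

Lemma flow_pull_incidence v x s : flow (pull_incidence v) x s =
  (s_plus th x s v)%:Z - (s_minus th x s v)%:Z
  - ((t_plus th x s v)%:Z - (t_minus th x s v)%:Z).
Proof.
rewrite /flow /s_plus /s_minus /t_plus /t_minus.
elim: (steps x s) => [|[a b] l IHl]; first by rewrite big_nil.
rewrite big_cons IHl /step_val /pull_incidence /=.
have [ab|_] := boolP (a < b)%O; first by rewrite (lt_gtF ab) /=; lia.
by case: (b < a)%O; lia.
Qed.

Lemma pull_incidence_inv v (q : BT) :
  pull_incidence v (val q).1 (val q).2 = edge_vec (val (thi q)) v.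
Proof.
have pullE (P : pred BT) :
    [exists p : BT, P p && (val (th p) == ((val q).1, (val q).2))] = P (thi q).
  apply/existsP/idP => [[p /andP[Pp /eqP thp]] | Pq]; last first.
    by exists (thi q); rewrite Pq thiK -surjective_pairing eqxx.
  suff <- : p = thi q by [].
  by rewrite -[p]thK; congr thi; apply: val_inj; rewrite thp -surjective_pairing.
rewrite /pull_incidence (pullE (fun p => (val p).1 == v)).
by rewrite (pullE (fun p => (val p).2 == v)).
Qed.

Lemma cover_potential_inv : cover_potential thi.
Proof.
move=> v; have [|P Pcover] := zero_circulation_potential (g := pull_incidence v) Xconn.
  by move=> x s ps sx; rewrite flow_pull_incidence (th_adm ps sx) subrr.
by exists P => q /Pcover; rewrite pull_incidence_inv.
Qed.

Lemma covers_inv (q : BT) :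
  covers (val q).1 (val q).2 -> covers (val (thi q)).1 (val (thi q)).2.
Proof. by move=> qcov; apply: (chain_monotone_reflect_covers thM); rewrite thiK. Qed.

Lemma cover_potential_iter_inv n : cover_potential (iter n thi).
Proof.
elim: n => [|n IHn] v.
  by exists (fun u => - ind u v) => q _; rewrite /edge_vec opprK addrC.
have [h hcover] := IHn v; have [P Pcover] := fin_all_exists cover_potential_inv.
exists (fun x => - \sum_u h u * P u x) => q qcov.
rewrite iterSr (hcover _ (covers_inv qcov)) edge_vec_pairing.
under eq_bigr => u _ do rewrite Pcover // mulrBr.
by rewrite sumrB opprB opprK addrC.
Qed.

Lemma chain_monotone_inv : chain_monotone thi.
Proof.
have [n thiE] := cancel_iter thK.
by apply: eq_chain_monotone (chain_monotone_iter n thM) => q; rewrite thiE.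
Qed.

Lemma admissible_potential_inv : exists H, potential thi H.
Proof. exact: cover_potential_extend chain_monotone_inv (cover_potential_iter_inv 1). Qed.

Lemma admissible_potential : exists H, potential th H.
Proof.
apply: cover_potential_extend thM _ => v; have [n thE] := cancel_iter thiK.
by have [h hcover] := cover_potential_iter_inv n v; exists h => q; rewrite thE; apply: hcover.
Qed.

End AdmissiblePotential.

Section Labels.
Context {d : Order.disp_t} {X : finPOrderType d}.
Local Notation BT := (@Bt d X).
Local Open Scope ring_scope.
Implicit Types (E F : {set X}) (g : X -> X).
Variable th : BT -> BT.
Hypothesis thM : chain_monotone th.
Variable H : X -> X -> int.
Hypothesis thH : potential th H.
Variables (C D : {set X}) (f : X -> X) (b : bool).
Hypotheses (mC : maxchain C) (thC : chain_map th C D f b).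
Variable x0 : X.
Hypothesis x0C : x0 \in C.

Definition oriented_pot v x := if b then H v x else - H v x.

(* [label_vec x] is lambda(x); on [C] it is the indicator of [f x], and
   [label x] is its support when it is a unit vector. *)
Definition label_vec x v := oriented_pot v x0 + ind (f x0) v - oriented_pot v x.

Definition label x := odflt x [pick v | label_vec x v == 1].

Definition unit_label x := forall v, label_vec x v = ind (label x) v.

Definition unit_chain E := {in E, forall x, unit_label x}.

Lemma label_vecB (q : BT) v : label_vec (val q).2 v - label_vec (val q).1 v =
  if b then ind (val (th q)).2 v - ind (val (th q)).1 v
  else ind (val (th q)).1 v - ind (val (th q)).2 v.
Proof. by have := thH v q; rewrite /label_vec /oriented_pot /edge_vec; case: (b); lia. Qed.

Lemma unit_label_of x a : (forall v, label_vec x v = ind a v) -> unit_label x /\ label x = a.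
Proof.
move=> xa; suff xaE : label x = a by split=> // v; rewrite xaE.
rewrite /label; case: pickP => [v /eqP|/(_ a)]; rewrite xa /ind ?eqxx //.
by case: eqP.
Qed.

Lemma unit_label_map x y (q : BT) : unit_label x -> unit_label y -> val q = (x, y) ->
  val (th q) = if b then (label x, label y) else (label y, label x).
Proof.
move=> ux uy qxy; have := label_vecB q; rewrite qxy /= => lvB.
have thq_neq : (val (th q)).1 != (val (th q)).2 by case: (th q) => -[p1 p2] /= /lt_eqF ->.
rewrite [val (th q)]surjective_pairing; case: (b) lvB => lvB.
  have [-> ->] : label y = (val (th q)).2 /\ label x = (val (th q)).1.
    by apply: ind_diff_inj; rewrite 1?eq_sym // => v; rewrite -lvB ux uy.
  by [].
have [-> ->] : label y = (val (th q)).1 /\ label x = (val (th q)).2.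
  by apply: ind_diff_inj => // v; rewrite -lvB ux uy.
by [].
Qed.

Lemma unit_chain_mono E : unit_chain E -> strict_mono_in b E label.
Proof.
move=> uE x y xE yE xy.
have := unit_label_map (uE x xE) (uE y yE) (erefl : val (Sub (x, y) xy : BT) = (x, y)).
by case: (th _) => -[p1 p2] /= p12; case: (b) => -[<- <-].
Qed.

Lemma label_vecB_chain E F g b' : maxchain E -> chain_map th E F g b' ->
  {in E &, forall x y v, label_vec y v - label_vec x v =
     if b == b' then ind (g y) v - ind (g x) v else ind (g x) v - ind (g y) v}.
Proof.
move=> mE thE x y xE yE v.
have lt_case x' y' : x' \in E -> y' \in E -> (x' < y')%O -> label_vec y' v - label_vec x' v =
    if b == b' then ind (g y') v - ind (g x') v else ind (g x') v - ind (g y') v.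
  move=> x'E y'E x'y'; have := label_vecB (Sub (x', y') x'y') v.
  rewrite (chain_map_val (p := Sub (x', y') x'y') thE x'E y'E x'y' erefl) /=.
  by case: (b); case: (b').
case: (comparable_ltgtP (maxchain_chain mE xE yE)) => [xy|yx|->].
- exact: lt_case.
- by have := lt_case y x yE xE yx; case: (b == b'); lia.
- by case: (b == b'); rewrite !subrr.
Qed.

Lemma unit_chain_label_mem E F g b' x y : unit_chain E -> chain_map th E F g b' ->
  x \in E -> y \in E -> (x < y)%O -> (label x \in F) && (label y \in F).
Proof.
move=> uE thE xE yE xy; have gF := chain_map_mem thE.
have := unit_label_map (uE x xE) (uE y yE) (erefl : val (Sub (x, y) xy : BT) = (x, y)).
rewrite (chain_map_val (p := Sub (x, y) xy) thE xE yE xy erefl).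
by case: (b); case: (b') => -[<- <-]; rewrite !gF.
Qed.

Lemma unit_chain_label_image E F g b' a c : maxchain E -> unit_chain E ->
  chain_map th E F g b' -> a \in E -> c \in E -> (a < c)%O -> label @: E = F.
Proof.
move=> mE uE thE aE cE ac; apply/eqP; rewrite eqEcard; apply/andP; split.
  apply/subsetP => _ /imsetP[x xE ->].
  have [xa|/eqP xa] := eqVneq x a.
    by rewrite xa; case/andP: (unit_chain_label_mem uE thE aE cE ac).
  case: (comparable_ltgtP (maxchain_chain mE xE aE)) => [xa'|ax|//].
    by case/andP: (unit_chain_label_mem uE thE xE aE xa').
  by case/andP: (unit_chain_label_mem uE thE aE xE ax).
case: thE => _ gmono <- _.
rewrite !card_in_imset //; first exact: strict_mono_in_inj mE (unit_chain_mono uE).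
exact: strict_mono_in_inj mE gmono.
Qed.

Lemma unit_chain_extremal E a c : maxchain E -> unit_chain E ->
  a \in E -> c \in E -> (a < c)%O -> {in E, forall x, extremal (label x) = extremal x}.
Proof.
move=> mE uE aE cE ac; have [F [g [b' thE]]] := thM mE.
have lE := unit_chain_label_image mE uE thE aE cE ac.
by case: thE => mF _ _ _; apply: extremal_image mE mF lE (unit_chain_mono uE).
Qed.

Lemma unit_chain_transfer E E' a c : maxchain E -> unit_chain E -> maxchain E' ->
  a \in E -> c \in E -> a \in E' -> c \in E' -> (a < c)%O ->
  extremal a != extremal c -> unit_chain E'.
Proof.
move=> mE uE mE' aE cE aE' cE' ac ext_ac.
have [F [g [b' thE']]] := thM mE'; have lvB := label_vecB_chain mE' thE'.
have ind_lac v : ind (label c) v - ind (label a) v =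
    if b == b' then ind (g c) v - ind (g a) v else ind (g a) v - ind (g c) v.
  by rewrite -(lvB a c aE' cE' v) -(uE a aE) -(uE c cE).
case: thE' => mF gmono gE' _; have ginj := strict_mono_in_inj mE' gmono.
have gac : g a != g c by apply: contraTneq ac => /ginj-> //; rewrite ltxx.
have [bb'|bb'] := eqVneq b b'.
  have [_ la] : label c = g c /\ label a = g a.
    by apply: ind_diff_inj; [move=> v; rewrite ind_lac bb' eqxx | rewrite eq_sym].
  move=> x xE'; apply: proj1 (unit_label_of (a := g x) _) => v.
  have := lvB a x aE' xE' v; rewrite bb' eqxx (uE a aE) la.
  by move/addIr.
have [_ la] : label c = g a /\ label a = g c.
  by apply: ind_diff_inj => // v; rewrite ind_lac (negbTE bb').
move: ext_ac; rewrite -(unit_chain_extremal mE uE aE cE ac aE) la.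
by rewrite (extremal_image mE' mF gE' gmono cE') eqxx.
Qed.

Lemma unit_chain_linked E1 E2 z : maxchain E1 -> unit_chain E1 -> maxchain E2 ->
  z \in E1 -> z \in E2 -> ~~ is_min z -> ~~ is_max z -> unit_chain E2.
Proof.
move=> m1 u1 m2 z1 z2 zmin zmax; have m3 := splice_maxchain m1 m2 z1 z2.
have zext : extremal z = false by rewrite /extremal (negbTE zmin) (negbTE zmax).
have [u uE1 /andP[umin uz]] := maxchain_min_lt m1 z1 zmin.
have [w wE2 /andP[wmax zw]] := maxchain_max_gt m2 z2 zmax.
apply: (unit_chain_transfer m3 _ m2 (a := z) (c := w)); rewrite ?inE ?z2 ?z1 ?lexx ?orbT //.
- apply: (unit_chain_transfer m1 u1 m3 (a := u) (c := z)); rewrite ?inE ?z1 ?lexx //.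
    by rewrite uE1 (ltW uz).
  by rewrite zext /extremal umin.
- by rewrite wE2 (ltW zw) orbT.
- by rewrite zext /extremal wmax orbT.
Qed.

Definition well_labelled E := [/\ maxchain E, unit_chain E &
  exists2 F, maxchain F /\ chain_equiv D F & {in E, forall x, label x \in F}].

Lemma well_labelled_base : well_labelled C.
Proof.
have lv_x0 v : label_vec x0 v = ind (f x0) v by rewrite /label_vec addrC addKr.
have labelC x : x \in C -> unit_label x /\ label x = f x.
  move=> xC; apply: unit_label_of => v.
  have := label_vecB_chain mC thC x0C xC v; rewrite eqxx lv_x0.
  by move/addIr.
split=> //; first by move=> x /labelC[].
exists D; first by case: thC => mD _ _ _; split=> //; apply: connect0.
by move=> x xC; have [_ ->] := labelC x xC; apply: (chain_map_mem thC xC).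
Qed.

Lemma well_labelled_linked E1 E2 : linked E1 E2 -> well_labelled E1 -> well_labelled E2.
Proof.
case/and3P=> m1 m2 /exists_inP[z]; rewrite inE => /andP[z1 z2] /andP[zmin zmax].
case=> _ u1 [F1 [mF1 DF1] lF1]; have u2 := unit_chain_linked m1 u1 m2 z1 z2 zmin zmax.
have [w wE2 /andP[_ zw]] := maxchain_max_gt m2 z2 zmax.
have [F2 [g [b' thE2]]] := thM m2.
have lE2 := unit_chain_label_image m2 u2 thE2 z2 wE2 zw.
have mF2 : maxchain F2 by case: thE2.
split=> //; exists F2; last by move=> x xE2; rewrite -lE2 imset_f.
split=> //; apply: connect_trans DF1 (connect1 _); rewrite /linked mF1 mF2.
apply/exists_inP; exists (label z); first by rewrite inE lF1 // -lE2 imset_f.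
have := unit_chain_extremal m2 u2 z2 wE2 zw z2.
by rewrite -negb_or /extremal (negbTE zmin) (negbTE zmax) => ->.
Qed.

Lemma well_labelled_equiv E : chain_equiv C E -> well_labelled E.
Proof.
case/connectP => p; move: well_labelled_base; elim: p C => [|E1 p IHp] E0 wE0 /=.
  by move=> _ ->.
by case/andP=> E01; apply: IHp; apply: well_labelled_linked E01 wE0.
Qed.

Lemma label_supp_labelling : supp_labelling th C D label b.
Proof.
have suppC x : x \in supp C -> unit_label x /\ label x \in supp D.
  case/bigcupP=> E /andP[mE CE] xE; have [_ uE [F [mF DF] lF]] := well_labelled_equiv CE.
  by split; [apply: uE | apply/bigcupP; exists F; rewrite ?mF ?DF ?lF].
split=> [x y xS yS xy p pxy | x /suppC[] //].
by rewrite (unit_label_map (proj1 (suppC x xS)) (proj1 (suppC y yS)) pxy); case: (b).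
Qed.

End Labels.

Section SupportIsomorphism.
Context {d : Order.disp_t} {X : finPOrderType d}.
Local Notation BT := (@Bt d X).
Implicit Types (th thi : BT -> BT) (A B C D : {set X}) (f l : X -> X) (b : bool).

Definition supp_iso th A B l :=
  {in supp A &, injective l} /\ l @: supp A = supp B /\
  (({in supp A &, forall x y, (x <= y)%O = (l x <= l y)%O} /\
    {in supp A &, forall x y, (x < y)%O -> maps_to th x y (l x) (l y)})
   \/
   ({in supp A &, forall x y, (x <= y)%O = (l y <= l x)%O} /\
    {in supp A &, forall x y, (x < y)%O -> maps_to th x y (l y) (l x)})).

Lemma chain_class_labelling th H C D f b : chain_monotone th -> potential th H ->
  maxchain C -> chain_map th C D f b -> exists l, supp_labelling th C D l b.
Proof.
move=> thM thH mC thC; have [x0 x0C | C0] := pickP (mem C).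
  by exists (label H f b x0); apply: label_supp_labelling.
have noX (x : X) : False.
  move: (C0 x) => /negbT/negP; apply; apply: (maxchainP mC) => e eC.
  by have := C0 e; rewrite /= eC.
by exists id; split=> [x | x]; have := noX x.
Qed.

Lemma supp_labelling_round th thi A B l1 l2 b : cancel th thi ->
  supp_labelling th A B l1 b -> supp_labelling thi B A l2 b ->
  {in supp A &, forall x y, (x < y)%O -> l2 (l1 x) = x /\ l2 (l1 y) = y}.
Proof.
move=> thK [thl1 l1B] [thil2 _] x y xA yA xy; set q : BT := Sub (x, y) xy.
set u := if b then l1 x else l1 y; set v := if b then l1 y else l1 x.
have thq : val (th q) = (u, v) by apply: thl1.
have uv : (u < v)%O by apply: maps_to_lt xy (thl1 x y xA yA xy).
have [uB vB] : u \in supp B /\ v \in supp B by rewrite /u /v; case: (b); rewrite !l1B.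
have := thil2 u v uB vB uv (th q) thq; rewrite thK /= /u /v.
by case: (b) => -[<- <-].
Qed.

Lemma supp_labelling_cancel th thi A B l1 l2 b : cancel th thi ->
  supp_labelling th A B l1 b -> supp_labelling thi B A l2 b ->
  (forall x : X, exists w, (x < w)%O || (w < x)%O) -> {in supp A, cancel l1 l2}.
Proof.
move=> thK L1 L2 nbr x /[dup] xA /bigcupP[E /andP[mE AE] xE].
have [w xw] := nbr x; have [e eE xe] := maxchain_lt_neighbor mE xE xw.
have eA : e \in supp A by apply/bigcupP; exists E; rewrite ?mE.
have round := supp_labelling_round thK L1 L2.
by case/orP: xe => [/(round x e xA eA)[] | /(round e x eA xA)[]].
Qed.

Lemma supp_labelling_le th thi A B l1 l2 b :
  supp_labelling th A B l1 b -> supp_labelling thi B A l2 b -> {in supp A, cancel l1 l2} ->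
  {in supp A &, forall x y, (x <= y)%O = (if b then l1 x <= l1 y else l1 y <= l1 x)%O}.
Proof.
move=> [thl1 l1B] [thil2 _] l1K x y xA yA; apply/idP/idP.
  rewrite le_eqVlt => /predU1P[-> | xy]; first by case: (b).
  by have := maps_to_lt xy (thl1 x y xA yA xy); case: (b) => /ltW.
set u := if b then l1 x else l1 y; set v := if b then l1 y else l1 x.
have [uB vB] : u \in supp B /\ v \in supp B by rewrite /u /v; case: (b); rewrite !l1B.
have -> : (if b then l1 x <= l1 y else l1 y <= l1 x)%O = (u <= v)%O.
  by rewrite /u /v; case: (b).
rewrite le_eqVlt => /predU1P[uv | uv].
  have l1inj := can_in_inj l1K.
  by move: uv; rewrite /u /v; case: (b) => /l1inj ->.
have := maps_to_lt uv (thil2 u v uB vB uv).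
by rewrite /u /v; case: (b); rewrite !l1K // => /ltW.
Qed.

Lemma supp_labelling_iso th thi A B l1 l2 b : cancel th thi -> cancel thi th ->
  supp_labelling th A B l1 b -> supp_labelling thi B A l2 b ->
  (forall x : X, exists w, (x < w)%O || (w < x)%O) -> supp_iso th A B l1.
Proof.
move=> thK thiK L1 L2 nbr; have l1K := supp_labelling_cancel thK L1 L2 nbr.
have l2K := supp_labelling_cancel thiK L2 L1 nbr.
have l1le := supp_labelling_le L1 L2 l1K.
case: L1 L2 => [thl1 l1B] [_ l2A].
split; first exact: can_in_inj l1K.
split.
  apply/setP => y; apply/imsetP/idP => [[x xA ->] | yB]; first exact: l1B.
  by exists (l2 y); rewrite ?l2A // l2K.
by case: (b) l1le thl1 => l1le thl1; [left | right].
Qed.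

Lemma supp_iso_trivial th C D : maxchain C -> maxchain D ->
  (forall x y : X, x = y) -> supp_iso th C D id.
Proof.
move=> mC mD Xtriv; have setT_max (E : {set X}) : maxchain E -> E = setT.
  move=> mE; apply/setP => x; rewrite inE (maxchainP mE) // => e _.
  by rewrite (Xtriv x e) comparablexx.
rewrite /supp_iso imset_id (setT_max C mC) (setT_max D mD).
by split=> //; split=> //; left; split=> x y _ _; rewrite (Xtriv x y) ?lexx // ltxx.
Qed.

End SupportIsomorphism.

Theorem theorem3p10 (d : Order.disp_t) (X : finPOrderType d)
  (hX : @connected_poset d X) (theta : @Bt d X -> @Bt d X)
  (htheta : inAM theta) (C D : {set X})
  (hC : maxchain C) (hD : image_chain theta C D) :
  exists lambda : X -> X,
    {in supp C &, injective lambda} /\ lambda @: supp C = supp D /\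
    (({in supp C &, forall x y, (x <= y) = (lambda x <= lambda y)} /\
      {in supp C &, forall x y, x < y -> maps_to theta x y (lambda x) (lambda y)})
     \/
     ({in supp C &, forall x y, (x <= y) = (lambda y <= lambda x)} /\
      {in supp C &, forall x y, x < y -> maps_to theta x y (lambda y) (lambda x)})).
Proof.
case: htheta => -[[thi thK thiK] thM0] th_adm.
have thM : chain_monotone theta by apply: inM_chain_monotone; split=> //; exists thi.
have [f [b thC]] := image_chain_map hD.
have mD : maxchain D by case: thC.
have [Xtriv | nbr] := connected_trivial_or_comparable hX.
  by exists id; apply: supp_iso_trivial.
have [H thH] := admissible_potential thK thiK thM th_adm hX.
have [Hi thiH] := admissible_potential_inv thK thiK thM th_adm hX.
have [g thiD] := chain_map_inv thK thiK hC thC.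
have [l1 L1] := chain_class_labelling thM thH hC thC.
have [l2 L2] := chain_class_labelling (chain_monotone_inv thK thM) thiH mD thiD.
by exists l1; apply: supp_labelling_iso thK thiK L1 L2 nbr.
Qed.
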